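(* Under the Setting and Algorithm described in the context, if $\{x_k\}_{k\ge1}$ is generated by the inexact CSA algorithm with policy (P1), then $\mathcal B\neq\emptyset$, so that $\bar x_{N,s}$ is well defined.
   Context: Setting. $\mathcal X\subset\mathbb R^n$ is convex and compact; $f:\mathcal X\to\mathbb R$ is convex and $L_f$-Lipschitz; $\Delta\subset\mathbb R^d$ is compact; $g:\mathcal X\times\Delta\to\mathbb R$ is such that for every $\delta\in\Delta$, $x\mapsto g(x,\delta)$ is convex and $L_{g,\mathcal X}$-Lipschitz, and for every $x\in\mathcal X$, $\delta\mapsto g(x,\delta)$ is $L_{g,\Delta}$-Lipschitz. Let $G(x):=\max_{\delta\in\Delta}g(x,\delta)$ and assume the problem $\min_{x\in\mathcal X}\{f(x):G(x)\le0\}$ has an optimal solution $x^*$. Norms are Euclidean. $f'(x)$ denotes a subgradient of $f$ at $x$ and $g'(x,\delta)$ a subgradient of $g(\cdot,\delta)$ at $x$. Let $\omega_{\mathcal X}:\mathcal X\to\mathbb R$ be continuously differentiable and $1$-strongly convex; $V(x,z):=\omega_{\mathcal X}(z)-\omega_{\mathcal X}(x)-\langle\nabla\omega_{\mathcal X}(x),z-x\rangle$; prox-mapping $P_{x,\mathcal X}(y):=\arg\min_{z\in\mathcal X}\{\langle y,z\rangle+V(x,z)\}$; $D_{\mathcal X}:=\sqrt{\max_{x,z\in\mathcal X}V(x,z)}$. Algorithm (inexact CSA). Inputs: $N\ge1$, $x_1\in\mathcal X$, tolerances $\eta_k>0$, step-sizes $\gamma_k>0$. For $k=1,\dots,N$: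 choose some $\delta_k\in\Delta$ (an approximate maximizer of $g(x_k,\cdot)$); set $h_k=f'(x_k)$ if $g(x_k,\delta_k)\le\eta_k$ and $h_k=g'(x_k,\delta_k)$ otherwise; set $x_{k+1}=P_{x_k,\mathcal X}(\gamma_kh_k)$. For $1\le s\le N$ let $I=\{s,\dots,N\}$, $\mathcal B:=\{k\in I: g(x_k,\delta_k)\le\eta_k\}$, $\mathcal N:=I\setminus\mathcal B$, and output $\bar x_{N,s}:=\sum_{k\in\mathcal B}\gamma_kx_k/\sum_{k\in\mathcal B}\gamma_k$. Policy (P1): $\eta_k=\frac{6(L_f+L_{g,\mathcal X})D_{\mathcal X}}{\sqrt k}$, $\gamma_k=\frac{D_{\mathcal X}}{\sqrt k(L_f+L_{g,\mathcal X})}$ for $k=1,\dots,N$, and $s=\lceil N/2\rceil$. *)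

From Stdlib Require Import Reals Lra.
Open Scope R_scope.

(* Points of R^m are encoded as functions nat -> R whose coordinates
   of index >= m vanish (see [inRn]). *)
Definition vec := nat -> R.

Fixpoint rsum (m : nat) (u : nat -> R) : R :=
  match m with O => 0 | S p => rsum p u + u p end.

Definition dot (m : nat) (u v : vec) : R := rsum m (fun i => u i * v i).
Definition vnorm (m : nat) (u : vec) : R := sqrt (dot m u u).
Definition vsub (u v : vec) : vec := fun i => u i - v i.
Definition vscale (a : R) (u : vec) : vec := fun i => a * u i.
Definition vcomb (t : R) (u v : vec) : vec := fun i => t * u i + (1 - t) * v i.

Definition inRn (m : nat) (u : vec) : Prop := forall i, (m <= i)%nat -> u i = 0.
Definition subset_Rn (m : nat) (A : vec -> Prop) : Prop := forall u, A u -> inRn m u.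

Definition convex_set (A : vec -> Prop) : Prop :=
  forall u v t, A u -> A v -> 0 <= t <= 1 -> A (vcomb t u v).

Definition seq_cv (m : nat) (u : nat -> vec) (l : vec) : Prop :=
  forall eps, 0 < eps -> exists K, forall k, (K <= k)%nat -> vnorm m (vsub (u k) l) < eps.

(* sequential compactness (equivalent to compactness in R^m) *)
Definition seq_compact (m : nat) (A : vec -> Prop) : Prop :=
  forall u : nat -> vec, (forall k, A (u k)) ->
  exists (phi : nat -> nat) (l : vec),
    (forall k, (phi k < phi (S k))%nat) /\ A l /\ seq_cv m (fun k => u (phi k)) l.

Definition convex_on (A : vec -> Prop) (F : vec -> R) : Prop :=
  forall u v t, A u -> A v -> 0 <= t <= 1 ->
    F (vcomb t u v) <= t * F u + (1 - t) * F v.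

Definition lipschitz_on (m : nat) (A : vec -> Prop) (F : vec -> R) (L : R) : Prop :=
  forall u v, A u -> A v -> Rabs (F u - F v) <= L * vnorm m (vsub u v).

Definition is_subgradient (m : nat) (A : vec -> Prop) (F : vec -> R) (u s : vec) : Prop :=
  inRn m s /\ forall z, A z -> F z >= F u + dot m s (vsub z u).

Definition has_gradient_on (m : nat) (A : vec -> Prop) (w : vec -> R) (gw : vec -> vec) : Prop :=
  forall u, A u -> inRn m (gw u) /\
    forall eps, 0 < eps -> exists del, 0 < del /\ forall z, A z ->
      vnorm m (vsub z u) < del ->
      Rabs (w z - w u - dot m (gw u) (vsub z u)) <= eps * vnorm m (vsub z u).

Definition vcontinuous_on (m : nat) (A : vec -> Prop) (G : vec -> vec) : Prop :=
  forall u, A u -> forall eps, 0 < eps -> exists del, 0 < del /\ forall z, A z ->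
    vnorm m (vsub z u) < del -> vnorm m (vsub (G z) (G u)) < eps.

Definition strongly_convex1 (m : nat) (A : vec -> Prop) (w : vec -> R) : Prop :=
  forall u v t, A u -> A v -> 0 <= t <= 1 ->
    w (vcomb t u v) <= t * w u + (1 - t) * w v - t * (1 - t) / 2 * (vnorm m (vsub u v)) ^ 2.

Definition bregman (m : nat) (w : vec -> R) (gw : vec -> vec) (u z : vec) : R :=
  w z - w u - dot m (gw u) (vsub z u).

Definition is_prox (m : nat) (A : vec -> Prop) (w : vec -> R) (gw : vec -> vec)
  (u y p : vec) : Prop :=
  A p /\ forall z, A z -> dot m y p + bregman m w gw u p <= dot m y z + bregman m w gw u z.

Definition csa_eta (Lf LgX DX : R) (k : nat) : R := 6 * (Lf + LgX) * DX / sqrt (INR k).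
Definition csa_gamma (Lf LgX DX : R) (k : nat) : R := DX / (sqrt (INR k) * (Lf + LgX)).

Definition csa_h (g : vec -> vec -> R) (fp : vec -> vec) (gp : vec -> vec -> vec)
  (eta : nat -> R) (x delta : nat -> vec) (k : nat) : vec :=
  if Rle_dec (g (x k) (delta k)) (eta k) then fp (x k) else gp (x k) (delta k).

From Stdlib Require Import Reals Lra Lia Psatz Classical FunctionalExtensionality.
Open Scope R_scope.

(* Suppose no step k in [s, N] is feasible up to eta_k.  Each of those steps
   is then a mirror-descent step on the constraint, and the three-point
   inequality for the prox-mapping shows that the Bregman distance to xstar
   drops by gamma_k eta_k - gamma_k^2 (L_f + L_g)^2 / 2 = 11 D^2 / (2 k).
   Over the at least N/2 steps from s to N this is at least 11 D^2 / 4 in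
   total, more than the initial distance V(x_s, xstar) <= D^2 allows. *)

Lemma dot_vsub_r m a b c : dot m a (vsub b c) = dot m a b - dot m a c.
Proof. unfold dot, vsub; induction m; simpl; [ring | rewrite IHm; ring]. Qed.

Lemma dot_vscale_l m s a b : dot m (vscale s a) b = s * dot m a b.
Proof. unfold dot, vscale; induction m; simpl; [ring | rewrite IHm; ring]. Qed.

Lemma dot_vscale_r m s a b : dot m a (vscale s b) = s * dot m a b.
Proof. unfold dot, vscale; induction m; simpl; [ring | rewrite IHm; ring]. Qed.

Lemma dot_ge0 m a : 0 <= dot m a a.
Proof. unfold dot; induction m; simpl; [lra | nra]. Qed.

Lemma dot_le_half_sq m a b : dot m a b <= (dot m a a + dot m b b) / 2.
Proof. unfold dot; induction m; simpl; [lra | pose proof (pow2_ge_0 (a m - b m)); nra]. Qed.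

Lemma vnorm_ge0 m a : 0 <= vnorm m a.
Proof. apply sqrt_pos. Qed.

Lemma vnorm_sq m a : vnorm m a ^ 2 = dot m a a.
Proof. unfold vnorm; rewrite pow2_sqrt; [reflexivity | apply dot_ge0]. Qed.

Lemma vnorm_vscale m t a : 0 <= t -> vnorm m (vscale t a) = t * vnorm m a.
Proof.
  intro Ht; unfold vnorm; rewrite dot_vscale_l, dot_vscale_r, <- Rmult_assoc.
  rewrite sqrt_mult, sqrt_square; [reflexivity | assumption | nra | apply dot_ge0].
Qed.

Lemma vnorm_vsubC m u v : vnorm m (vsub u v) = vnorm m (vsub v u).
Proof.
  unfold vnorm; f_equal; unfold dot, vsub; induction m; simpl; [ring | rewrite IHm; ring].
Qed.

Lemma vsub_vcomb_l t z p : vsub (vcomb t z p) p = vscale t (vsub z p).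
Proof. apply functional_extensionality; intro i; unfold vsub, vcomb, vscale; ring. Qed.

Lemma subgradient_vsub_lower m X F u h z :
  is_subgradient m X F u h -> X z -> F u - F z <= dot m h (vsub u z).
Proof.
  intros [_ Hsub] Hz; specialize (Hsub z Hz); rewrite dot_vsub_r in *; lra.
Qed.

Section BregmanProx.

Variables (m : nat) (X : vec -> Prop) (w : vec -> R) (gw : vec -> vec).
Hypothesis X_convex : convex_set X.
Hypothesis w_gradient : has_gradient_on m X w gw.
Hypothesis w_strongly_convex : strongly_convex1 m X w.

Lemma gradient_directional_approx u z eps t1 :
  X u -> X z -> 0 < eps -> 0 < t1 ->
  exists t, 0 < t /\ t <= t1 /\ t <= 1 /\
    Rabs (w (vcomb t z u) - w u - t * dot m (gw u) (vsub z u)) <= eps * t.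
Proof.
  intros Hu Hz Heps Ht1.
  destruct (w_gradient u Hu) as [_ Hfrechet].
  set (nv := vnorm m (vsub z u)).
  assert (Hnv : 0 <= nv) by apply vnorm_ge0.
  destruct (Hfrechet (eps / (nv + 1))) as [del [Hdel Happrox]].
  { apply Rdiv_lt_0_compat; lra. }
  set (t := Rmin 1 (Rmin t1 (del / (2 * (nv + 1))))).
  assert (Ht : 0 < t) by (apply Rmin_pos; [lra | apply Rmin_pos; [lra |]];
                          apply Rdiv_lt_0_compat; lra).
  assert (Ht_1 : t <= 1) by apply Rmin_l.
  assert (Ht_t1 : t <= t1) by (eapply Rle_trans; [apply Rmin_r | apply Rmin_l]).
  assert (Ht_del : t * (nv + 1) <= del / 2).
  { assert (t <= del / (2 * (nv + 1))) by (eapply Rle_trans; [apply Rmin_r | apply Rmin_r]).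
    apply Rmult_le_compat_r with (r := nv + 1) in H; [| lra].
    replace (del / (2 * (nv + 1)) * (nv + 1)) with (del / 2) in H by (field; lra); lra. }
  exists t; repeat split; try lra.
  assert (Hzt : X (vcomb t z u)) by (apply X_convex; auto; lra).
  specialize (Happrox _ Hzt).
  rewrite vsub_vcomb_l, vnorm_vscale, dot_vscale_r in Happrox by lra; fold nv in Happrox.
  eapply Rle_trans; [apply Happrox; nra |].
  assert (Hq : eps / (nv + 1) * (nv + 1) = eps) by (field; lra).
  assert (0 < eps / (nv + 1)) by (apply Rdiv_lt_0_compat; lra).
  nra.
Qed.

Lemma gradient_dir_ge u z K :
  X u -> X z -> (forall t, 0 < t <= 1 -> t * K <= w (vcomb t z u) - w u) ->
  K <= dot m (gw u) (vsub z u).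
Proof.
  intros Hu Hz HK; apply Rle_plus_epsilon; intros eps Heps.
  destruct (gradient_directional_approx u z eps 1 Hu Hz Heps) as [t [Ht [_ [Ht1 Happrox]]]];
    [lra |].
  pose proof (Rle_abs (w (vcomb t z u) - w u - t * dot m (gw u) (vsub z u))) as Habs.
  specialize (HK t (conj Ht Ht1)).
  apply Rmult_le_reg_l with t; nra.
Qed.

Lemma gradient_dir_le u z K M :
  X u -> X z -> 0 <= M ->
  (forall t, 0 < t <= 1 -> w (vcomb t z u) - w u <= t * K + t * t * M) ->
  dot m (gw u) (vsub z u) <= K.
Proof.
  intros Hu Hz HM HK; apply Rle_plus_epsilon; intros eps Heps.
  destruct (gradient_directional_approx u z (eps / 2) (eps / (2 * (M + 1))) Hu Hz)
    as [t [Ht [Ht_eps [Ht1 Happrox]]]];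
    [lra | apply Rdiv_lt_0_compat; lra |].
  pose proof (Rle_abs (- (w (vcomb t z u) - w u - t * dot m (gw u) (vsub z u)))) as Habs.
  rewrite Rabs_Ropp in Habs; specialize (HK t (conj Ht Ht1)).
  assert (HtM : t * M <= eps / 2).
  { apply Rmult_le_compat_r with (r := M + 1) in Ht_eps; [| lra].
    replace (eps / (2 * (M + 1)) * (M + 1)) with (eps / 2) in Ht_eps by (field; lra); nra. }
  apply Rmult_le_reg_l with t; nra.
Qed.

Lemma bregman_ge_half_sq u p :
  X u -> X p -> vnorm m (vsub p u) ^ 2 / 2 <= bregman m w gw u p.
Proof.
  intros Hu Hp; unfold bregman.
  set (a := vnorm m (vsub p u) ^ 2).
  enough (dot m (gw u) (vsub p u) <= w p - w u - a / 2) by lra.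
  apply (gradient_dir_le u p _ (a / 2)); auto.
  - unfold a; pose proof (pow2_ge_0 (vnorm m (vsub p u))); lra.
  - intros t Ht; pose proof (w_strongly_convex p u t Hp Hu ltac:(lra)) as Hsc.
    fold a in Hsc; nra.
Qed.

Lemma bregman_ge0 u p : X u -> X p -> 0 <= bregman m w gw u p.
Proof.
  intros Hu Hp; pose proof (bregman_ge_half_sq u p Hu Hp).
  pose proof (pow2_ge_0 (vnorm m (vsub p u))); lra.
Qed.

Lemma bregman_three_point u p z :
  bregman m w gw u z - bregman m w gw p z - bregman m w gw u p =
  dot m (gw p) (vsub z p) - dot m (gw u) (vsub z p).
Proof. unfold bregman; rewrite !dot_vsub_r; ring. Qed.

Lemma prox_optimality u y p z :
  is_prox m X w gw u y p -> X z ->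
  dot m (gw u) (vsub z p) - dot m y (vsub z p) <= dot m (gw p) (vsub z p).
Proof.
  intros [Hp Hmin] Hz; apply gradient_dir_ge; auto.
  intros t Ht; assert (Hzt : X (vcomb t z p)) by (apply X_convex; auto; lra).
  specialize (Hmin _ Hzt).
  assert (Hlin : forall a, dot m a (vcomb t z p) = dot m a p + t * dot m a (vsub z p)).
  { intro a; rewrite <- dot_vscale_r, <- vsub_vcomb_l, dot_vsub_r; ring. }
  unfold bregman in Hmin; rewrite !dot_vsub_r, !Hlin, !dot_vsub_r in Hmin; rewrite !dot_vsub_r; nra.
Qed.

Lemma prox_step_ineq u y p z :
  X u -> X z -> is_prox m X w gw u y p ->
  dot m y (vsub u z) <= bregman m w gw u z - bregman m w gw p z + dot m y y / 2.
Proof.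
  intros Hu Hz Hprox.
  pose proof (prox_optimality u y p z Hprox Hz) as Hopt.
  pose proof (bregman_three_point u p z) as H3.
  pose proof (bregman_ge_half_sq u p Hu (proj1 Hprox)) as Hsc.
  pose proof (dot_le_half_sq m y (vsub u p)) as Hyoung.
  rewrite vnorm_vsubC, vnorm_sq in Hsc.
  rewrite !dot_vsub_r in *; lra.
Qed.

Lemma prox_cut_step (G : vec -> R) u h gam L eta p z :
  X u -> X z -> is_subgradient m X G u h -> vnorm m h <= L -> 0 < gam ->
  G z <= 0 -> eta < G u -> is_prox m X w gw u (vscale gam h) p ->
  bregman m w gw p z <= bregman m w gw u z - (gam * eta - (gam * L) ^ 2 / 2).
Proof.
  intros Hu Hz Hsub HhL Hgam HGz HGu Hprox.
  pose proof (prox_step_ineq u _ p z Hu Hz Hprox) as Hstep.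
  rewrite !dot_vscale_l, dot_vscale_r in Hstep.
  pose proof (subgradient_vsub_lower m X G u h z Hsub Hz) as Hcut.
  pose proof (vnorm_ge0 m h); pose proof (vnorm_sq m h).
  assert (Hhh : gam * (gam * dot m h h) <= (gam * L) ^ 2).
  { replace ((gam * L) ^ 2) with (gam * (gam * L ^ 2)) by ring.
    apply Rmult_le_compat_l; [lra |]; apply Rmult_le_compat_l; nra. }
  assert (Hlin : gam * eta <= gam * dot m h (vsub u z)) by nra.
  lra.
Qed.

End BregmanProx.

Lemma csa_gamma_pos Lf LgX DX k :
  0 < DX -> 0 < Lf + LgX -> (1 <= k)%nat -> 0 < csa_gamma Lf LgX DX k.
Proof.
  intros HD HL Hk; unfold csa_gamma.
  assert (0 < sqrt (INR k)) by (apply sqrt_lt_R0, lt_0_INR; lia).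
  apply Rdiv_lt_0_compat; nra.
Qed.

Lemma csa_policy_margin Lf LgX DX k :
  0 < Lf + LgX -> (1 <= k)%nat ->
  csa_gamma Lf LgX DX k * csa_eta Lf LgX DX k
    - (csa_gamma Lf LgX DX k * (Lf + LgX)) ^ 2 / 2 = 11 / 2 * DX ^ 2 / INR k.
Proof.
  intros HL Hk; unfold csa_gamma, csa_eta.
  assert (Hk0 : 0 < INR k) by (apply lt_0_INR; lia).
  pose proof (sqrt_lt_R0 _ Hk0); set (r := sqrt (INR k)) in *.
  assert (Hr : INR k = r * r) by (symmetry; apply sqrt_sqrt; lra).
  rewrite Hr; field; lra.
Qed.

Lemma csa_h_infeasible g fp gp eta x delta k :
  eta k < g (x k) (delta k) -> csa_h g fp gp eta x delta k = gp (x k) (delta k).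
Proof. intro Hk; unfold csa_h; destruct (Rle_dec _ _); [lra | reflexivity]. Qed.

Lemma csa_infeasible_step n X w gw g fp gp Lf LgX DX x delta xstar k :
  convex_set X -> has_gradient_on n X w gw -> strongly_convex1 n X w ->
  0 < DX -> 0 <= Lf -> 0 < Lf + LgX -> (1 <= k)%nat -> X (x k) -> X xstar ->
  is_subgradient n X (fun y => g y (delta k)) (x k) (gp (x k) (delta k)) ->
  vnorm n (gp (x k) (delta k)) <= LgX -> g xstar (delta k) <= 0 ->
  csa_eta Lf LgX DX k < g (x k) (delta k) ->
  is_prox n X w gw (x k)
    (vscale (csa_gamma Lf LgX DX k) (csa_h g fp gp (csa_eta Lf LgX DX) x delta k)) (x (S k)) ->
  11 / 2 * DX ^ 2 / INR k <= bregman n w gw (x k) xstar - bregman n w gw (x (S k)) xstar.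
Proof.
  intros HXc Hgrad Hsc HD HLf HL Hk Hxk Hxstar Hsub Hnorm Hgstar Hinf Hprox.
  rewrite csa_h_infeasible in Hprox by exact Hinf.
  pose proof (prox_cut_step n X w gw HXc Hgrad Hsc _ _ _ _ (Lf + LgX) _ _ _ Hxk Hxstar Hsub
    ltac:(lra) (csa_gamma_pos Lf LgX DX k HD HL Hk) Hgstar Hinf Hprox) as Hcut.
  rewrite csa_policy_margin in Hcut by assumption; lra.
Qed.

Lemma iterates_in (X : vec -> Prop) (x : nat -> vec) N :
  X (x 1%nat) -> (forall k, (1 <= k <= N)%nat -> X (x (S k))) ->
  forall k, (1 <= k <= N + 1)%nat -> X (x k).
Proof.
  intros H1 Hstep [| k] Hk; [lia |].
  destruct k as [| k]; [exact H1 | apply Hstep; lia].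
Qed.

Lemma telescope_lower_bound (a : nat -> R) c s j :
  (forall k, (s <= k < s + j)%nat -> c <= a k - a (S k)) ->
  INR j * c <= a s - a (s + j)%nat.
Proof.
  induction j as [| j IH]; intro Hdec.
  - rewrite Nat.add_0_r; simpl; lra.
  - rewrite Nat.add_succ_r, S_INR.
    specialize (IH (fun k Hk => Hdec k ltac:(lia))); specialize (Hdec (s + j)%nat ltac:(lia)).
    lra.
Qed.

Lemma second_half_telescope (a : nat -> R) c N :
  0 <= c -> (forall k, (Nat.div (N + 1) 2 <= k <= N)%nat -> c <= a k - a (S k)) ->
  INR N * c / 2 <= a (Nat.div (N + 1) 2) - a (N + 1)%nat.
Proof.
  intros Hc Hdec; set (s := Nat.div (N + 1) 2) in *.
  pose proof (Nat.div_mod (N + 1) 2 ltac:(lia)); pose proof (Nat.mod_upper_bound (N + 1) 2 ltac:(lia)).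
  assert (Hlen : INR N <= 2 * INR (N + 1 - s)).
  { replace 2 with (INR 2) by reflexivity; rewrite <- mult_INR; apply le_INR; lia. }
  pose proof (telescope_lower_bound a c s (N + 1 - s) (fun k Hk => Hdec k ltac:(lia))) as Htel.
  replace (s + (N + 1 - s))%nat with (N + 1)%nat in Htel by lia.
  nra.
Qed.

Theorem mainTheorem3
  (n d : nat) (X Delta : vec -> Prop) (f : vec -> R) (g : vec -> vec -> R)
  (Lf LgX LgD : R) (fp : vec -> vec) (gp : vec -> vec -> vec)
  (w : vec -> R) (gw : vec -> vec) (DX : R) (xstar : vec)
  (N : nat) (x delta : nat -> vec)
  (HXs : subset_Rn n X) (HXc : convex_set X) (HXk : seq_compact n X)
  (HDs : subset_Rn d Delta) (HDk : seq_compact d Delta)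
  (Hf : convex_on X f) (HfL : lipschitz_on n X f Lf)
  (Hg : forall del, Delta del ->
          convex_on X (fun y => g y del) /\ lipschitz_on n X (fun y => g y del) LgX)
  (HgD : forall y, X y -> lipschitz_on d Delta (fun del => g y del) LgD)
  (Hfp : forall y, X y -> is_subgradient n X f y (fp y) /\ vnorm n (fp y) <= Lf)
  (Hgp : forall y del, X y -> Delta del ->
          is_subgradient n X (fun z => g z del) y (gp y del) /\ vnorm n (gp y del) <= LgX)
  (Hopt : X xstar /\ (forall del, Delta del -> g xstar del <= 0) /\
          (forall y, X y -> (forall del, Delta del -> g y del <= 0) -> f xstar <= f y))
  (Hw : has_gradient_on n X w gw /\ vcontinuous_on n X gw /\ strongly_convex1 n X w)
  (HD : 0 <= DX /\ (forall y z, X y -> X z -> bregman n w gw y z <= DX ^ 2) /\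
        (exists y z, X y /\ X z /\ bregman n w gw y z = DX ^ 2))
  (Hpos : 0 < DX /\ 0 < Lf + LgX)
  (HN : (1 <= N)%nat)
  (Hx1 : X (x 1%nat))
  (Hdelta : forall k, (1 <= k <= N)%nat -> Delta (delta k))
  (Hstep : forall k, (1 <= k <= N)%nat ->
     is_prox n X w gw (x k)
       (vscale (csa_gamma Lf LgX DX k) (csa_h g fp gp (csa_eta Lf LgX DX) x delta k))
       (x (S k))) :
  exists k, (Nat.div (N + 1) 2 <= k <= N)%nat /\
            g (x k) (delta k) <= csa_eta Lf LgX DX k.
Proof.
  destruct Hopt as [Hxstar [Hg_xstar _]]; destruct Hw as [Hgrad [_ Hsc]].
  destruct HD as [_ [HDbound _]]; destruct Hpos as [HDpos HLpos].
  assert (HX : forall k, (1 <= k <= N + 1)%nat -> X (x k)).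
  { apply iterates_in; [exact Hx1 |]; intros k Hk; exact (proj1 (Hstep k Hk)). }
  assert (HLf : 0 <= Lf).
  { destruct (Hfp _ Hx1) as [_ Hn]; pose proof (vnorm_ge0 n (fp (x 1%nat))); lra. }
  set (s := Nat.div (N + 1) 2).
  assert (Hs : (1 <= s)%nat) by (apply Nat.div_le_lower_bound; lia).
  assert (HsN : (s <= N)%nat) by (apply Nat.Div0.div_le_upper_bound; lia).
  set (a := fun k => bregman n w gw (x k) xstar).
  set (c := 11 / 2 * DX ^ 2 / INR N).
  assert (HNpos : 0 < INR N) by (apply lt_0_INR; lia).
  apply NNPP; intro Hnone.
  assert (Hdecrease : forall k, (s <= k <= N)%nat -> c <= a k - a (S k)).
  { intros k Hk; assert (Hk1 : (1 <= k <= N)%nat) by lia.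
    assert (Hinf : csa_eta Lf LgX DX k < g (x k) (delta k)).
    { apply Rnot_le_lt; intro Hle; apply Hnone; exists k; split; [lia | exact Hle]. }
    destruct (Hgp (x k) (delta k) (HX k ltac:(lia)) (Hdelta k Hk1)) as [Hsub Hnorm].
    eapply Rle_trans; [| exact (csa_infeasible_step n X w gw g fp gp Lf LgX DX x delta xstar k
      HXc Hgrad Hsc HDpos HLf HLpos ltac:(lia) (HX k ltac:(lia)) Hxstar Hsub Hnorm
      (Hg_xstar _ (Hdelta k Hk1)) Hinf (Hstep k Hk1))].
    apply Rmult_le_compat_l; [nra |].
    apply Rinv_le_contravar; [apply lt_0_INR; lia | apply le_INR; lia]. }
  assert (Hc0 : 0 < c) by (apply Rdiv_lt_0_compat; nra).
  pose proof (second_half_telescope a c N ltac:(lra) Hdecrease) as Htel; fold s in Htel.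
  assert (Has : a s <= DX ^ 2) by (apply HDbound; [apply HX; lia | exact Hxstar]).
  assert (Ha_end : 0 <= a (N + 1)%nat) by (apply (bregman_ge0 n X w gw); auto; apply HX; lia).
  assert (Hc : INR N * c = 11 / 2 * DX ^ 2) by (unfold c; field; lra).
  assert (0 < DX ^ 2) by nra.
  lra.
Qed.
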